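(* Let $G$ be a 2-arc-colored directed multigraph. If $G$ is PC trail-connected, then there is no PC circuit which is bad in $G$.
   Context: $G$ has an arbitrary arc coloring $\phi:A(G)\to\{1,2\}$. Trails are directed walks without repeated arcs; a trail is properly colored (PC) if consecutive arcs have different colors (and, if closed, also the last and first arcs). $G$ is PC trail-connected if for every ordered pair of arcs $f_1,f_2$ there is a PC trail starting with arc $f_1$ and ending with arc $f_2$. A (multi)digraph is PC Euler if it has a PC closed trail containing all its arcs. A PC circuit is a subgraph $C$ of $G$ that is PC Euler with $d^+_{1,C}(v)\le 1$ and $d^+_{2,C}(v)\le1$ for all $v\in V(C)$ ($d^+_{i,H}(v)$ = number of arcs of color $i$ in $H$ leaving $v$). For a subgraph $C$, $G-C$ is obtained by deleting the arcs of $C$; connected components are those of the underlying undirected graph. A PC circuit $C$ is bad in $G$ if there is a connected component $D$ of $G-C$ such that $\max\{d^+_{1,C\cup D}(v),d^+_{2,C\cup D}(v)\}=1$ for every vertex $v\in V(C)\cap V(D)$. *)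

From mathcomp Require Import all_boot.
Set Implicit Arguments. Unset Strict Implicit. Unset Printing Implicit Defensive.

(* A 2-arc-colored directed multigraph: finite vertex type V, finite arc type
   A (parallel arcs allowed), tail/head maps, colouring col : A -> bool
   (false = colour 1, true = colour 2).  Subgraphs are given by arc sets. *)
Section PC.
Variables (V A : finType) (tl hd : A -> V) (col : A -> bool).

Definition pc_step (e f : A) : bool := (hd e == tl f) && (col e != col f).

Definition pc_trail (s : seq A) : bool :=
  if s is x :: s' then path pc_step x s' && uniq s else false.

Definition pc_closed_trail (s : seq A) : bool :=
  if s is x :: s' then pc_trail s && pc_step (last x s') x else false.

Definition pc_trail_connected : Prop :=
  forall f1 f2 : A, exists s : seq A,
    [/\ pc_trail s, head f1 s = f1 /\ s <> [::] & last f1 s = f2].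

Definition pc_euler (X : {set A}) : Prop :=
  exists s : seq A, pc_closed_trail s /\ (forall e, (e \in s) = (e \in X)).

Definition outdeg (X : {set A}) (i : bool) (v : V) : nat :=
  #|[set e in X | (tl e == v) && (col e == i)]|.

Definition vset (X : {set A}) : {set V} :=
  [set v | [exists e in X, (tl e == v) || (hd e == v)]].

Definition pc_circuit (C : {set A}) : Prop :=
  pc_euler C /\ forall v, v \in vset C -> outdeg C false v <= 1 /\ outdeg C true v <= 1.

Definition arc_adj (H : {set A}) : rel A := fun e f =>
  [&& e \in H, f \in H &
      [|| tl e == tl f, tl e == hd f, hd e == tl f | hd e == hd f]].

(* D is (the arc set of) a connected component of the underlying undirected
   graph of G - C (deleting the arcs of C); components are taken with their
   arcs, i.e. components consisting of an isolated vertex are not counted. *)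
Definition component_of_minus (C D : {set A}) : Prop :=
  exists2 e, e \in ~: C & D = [set f | connect (arc_adj (~: C)) e f].

Definition bad (C : {set A}) : Prop :=
  pc_circuit C /\
  exists D, component_of_minus C D /\
    forall v, v \in vset C :&: vset D ->
      maxn (outdeg (C :|: D) false v) (outdeg (C :|: D) true v) = 1.
End PC.

From mathcomp Require Import all_boot.

Set Implicit Arguments.
Unset Strict Implicit.
Unset Printing Implicit Defensive.

(* Follow a PC trail from an arc x of the bad circuit C to an arc e of the
   offending component D of G - C, and look at the first arc a of D it uses,
   preceded by an arc b outside D.  The arc b lies in C: otherwise it would be
   adjacent to a in G - C, hence in D.  At v = hd b the successor of b on the
   closed trail of C and the arc a both leave v with the colour opposite to
   that of b, and they differ since a is not in C; so v has out-degree at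
   least 2 in that colour in C + D, whereas badness forces it to be 1. *)

Lemma path_crossing (T : Type) (r : rel T) (P : pred T) x p :
  path r x p -> ~~ P x -> P (last x p) -> exists y z, [/\ r y z, ~~ P y & P z].
Proof.
elim: p x => [|y p IHp] x /=; first by move=> _ /negPf ->.
case/andP=> rxy pyp nPx; case Py: (P y); first by exists x, y; rewrite Py.
by apply: IHp => //; rewrite Py.
Qed.

Section BadCircuit.
Variables (V A : finType) (tl hd : A -> V) (col : A -> bool).

Lemma pc_closed_trail_cycle s :
  pc_closed_trail tl hd col s -> cycle (pc_step tl hd col) s.
Proof.
by case: s => [//|x s] /andP[/andP[pxs _] last_x]; rewrite /cycle rcons_path pxs.
Qed.

Lemma pc_euler_nonempty C : pc_euler tl hd col C -> exists x, x \in C.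
Proof. by case=> [[|x s] [//= _ memC]]; exists x; rewrite -memC mem_head. Qed.

Lemma pc_euler_next C b :
  pc_euler tl hd col C -> b \in C ->
  exists2 b', b' \in C & pc_step tl hd col b b'.
Proof.
case=> s [closed_s memC] bC; rewrite -memC in bC.
exists (next s b); first by rewrite -memC mem_next.
exact: next_cycle (pc_closed_trail_cycle closed_s) bC.
Qed.

Lemma component_of_minus_nonempty C D :
  component_of_minus tl hd C D -> exists e, e \in D.
Proof. by case=> e _ ->; exists e; rewrite inE connect0. Qed.

Lemma component_of_minus_disjoint C D f :
  component_of_minus tl hd C D -> f \in D -> f \notin C.
Proof.
case=> e eC -> /[!inE] ef.
have closedC : closed (arc_adj tl hd (~: C)) (mem (~: C)).
  by move=> u w /and3P[uC wC _]; rewrite /= uC wC.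
by move: eC; rewrite (closed_connect closedC ef) inE.
Qed.

Lemma component_of_minus_adj C D a f :
  component_of_minus tl hd C D -> a \in D ->
  arc_adj tl hd (~: C) a f -> f \in D.
Proof.
by case=> e _ -> /[!inE] ea af; apply: connect_trans ea (connect1 af).
Qed.

Lemma pc_trail_enters_component C D x e s :
  component_of_minus tl hd C D -> x \in C -> e \in D ->
  pc_trail tl hd col (x :: s) -> last x s = e ->
  exists b a, [/\ b \in C, a \in D & pc_step tl hd col b a].
Proof.
move=> compD xC + /andP[xs _] last_e; rewrite -last_e => eD.
have xD : x \notin D.
  by apply: contraL xC => /(component_of_minus_disjoint compD).
have [b [a [ba bD aD]]] := path_crossing (P := mem D) xs xD eD.
exists b, a; split=> //; apply: contraNT bD => bC.
apply: (component_of_minus_adj compD aD).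
case/andP: ba => /eqP hd_b _.
have aC := component_of_minus_disjoint compD aD.
by rewrite /arc_adj !inE bC (negbTE aC) hd_b eqxx !orbT.
Qed.

Lemma outdeg_gt1 (X : {set A}) i v a b :
  a != b -> a \in X -> b \in X -> tl a = v -> tl b = v -> col a = i -> col b = i ->
  1 < outdeg tl col X i v.
Proof.
move=> ab aX bX tl_a tl_b col_a col_b.
have <- : #|[set a; b]| = 2 by rewrite cards2 ab.
apply/subset_leq_card/subsetP => f /[!inE] /orP[] /eqP ->.
  by rewrite aX tl_a col_a !eqxx.
by rewrite bX tl_b col_b !eqxx.
Qed.

Lemma pc_step_into_component C D b a :
  pc_euler tl hd col C -> component_of_minus tl hd C D ->
  b \in C -> a \in D -> pc_step tl hd col b a ->
  hd b \in vset tl hd C :&: vset tl hd D /\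
  1 < outdeg tl col (C :|: D) (col a) (hd b).
Proof.
move=> eulerC compD bC aD /andP[/eqP hd_ba col_ba].
have [b' b'C /andP[/eqP hd_bb' col_bb']] := pc_euler_next eulerC bC.
split.
  rewrite inE /vset !inE; apply/andP; split; apply/existsP.
    by exists b; rewrite bC eqxx orbT.
  by exists a; rewrite aD hd_ba eqxx.
have ab' : a != b'.
  by apply: contraNneq (component_of_minus_disjoint compD aD) => ->.
apply: outdeg_gt1 ab' _ _ (esym hd_ba) (esym hd_bb') erefl _.
- by rewrite inE aD orbT.
- by rewrite inE b'C.
- by move: col_ba col_bb'; case: (col a); case: (col b); case: (col b').
Qed.

End BadCircuit.

Theorem lemma3 (V A : finType) (tl hd : A -> V) (col : A -> bool) :
  (forall a : A, tl a != hd a) ->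
  pc_trail_connected tl hd col ->
  ~ exists C : {set A}, bad tl hd col C.
Proof.
move=> _ connected [C [[eulerC _] [D [compD max_outdeg1]]]].
have [x xC] := pc_euler_nonempty eulerC.
have [e eD] := component_of_minus_nonempty compD.
have [[|y s] [trail [/= y_x _] last_e]] := connected x e; first by [].
subst y.
have [b [a [bC aD ba]]] := pc_trail_enters_component compD xC eD trail last_e.
have [vCD two_out] := pc_step_into_component eulerC compD bC aD ba.
set o := outdeg tl col (C :|: D) in two_out max_outdeg1.
have : o (col a) (hd b) <= maxn (o false (hd b)) (o true (hd b)).
  by case: (col a); rewrite ?leq_maxl ?leq_maxr.
by rewrite max_outdeg1 // leqNgt two_out.
Qed.
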